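(* Let $S=\{(n,k)\in\mathbb Z_{>0}^2:\gcd(n,k)=1,\ n\ge3,\ n-k\text{ odd},\ k\not\equiv2\ (\mathrm{mod}\ 4)\}$ and $T=\{(m,q)\in\mathbb Z^2:1<q<m,\ \gcd(m,q)=1\}$. Define $\theta:S\to T$ by $\theta(n,k)=(n+\tfrac k2,\,n)$ if $n$ is odd and $\theta(n,k)=(\tfrac n2+k,\,\tfrac n2)$ if $n$ is even. Then $\theta$ is a well-defined bijection (with inverse $(m,q)\mapsto(q,2(m-q))$ if $m-q$ is even and $(m,q)\mapsto(2q,m-q)$ if $m-q$ is odd), and for every $(n,k)\in S$ there is an isomorphism $\Bbbk_{-1}[u,v]^{G_{n,k}}\cong\Bbbk[u,v]^{\mathbb D_{\theta(n,k)}}$.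
   Context: $\Bbbk$ is algebraically closed of characteristic $0$; $\Bbbk_{-1}[u,v]=\Bbbk\langle u,v\rangle/(vu+uv)$ and $\Bbbk[u,v]$ is the commutative polynomial ring; matrices $\begin{pmatrix}a&b\\c&d\end{pmatrix}$ act by $u\mapsto au+cv$, $v\mapsto bu+dv$. $G_{n,k}$ is generated by $\mathrm{diag}(\omega^{2k},\omega^{-2k})$ and $\begin{pmatrix}0&\omega^n\\\omega^n&0\end{pmatrix}$ for $\omega$ a primitive $(2nk)$th root of unity. For $(m,q)\in T$ and $\eta$ a primitive $4q(m-q)$th root of unity, $\mathbb D_{m,q}\le\mathrm{GL}(2,\Bbbk)$ is generated by $\mathrm{diag}(\eta^{2(m-q)},\eta^{-2(m-q)})$ and $\begin{pmatrix}0&\eta^q\\\eta^q&0\end{pmatrix}$. *)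

From HB Require Import structures.
From mathcomp Require Import all_boot all_order all_algebra.
Set Implicit Arguments. Unset Strict Implicit. Unset Printing Implicit Defensive.
Import Order.TTheory GRing.Theory Num.Theory.
Local Open Scope ring_scope.

(* Two-variable polynomials are represented as {poly {poly K}}:
   p`_i`_j is the coefficient of the monomial u^i v^j.
   U = 'X (variable u), V = 'X%:P (variable v). *)
Section TwoVar.
Variable K : fieldType.

Definition bipoly := {poly {poly K}}.
Definition U : bipoly := 'X.
Definition V : bipoly := ('X)%:P.
Definition cst (c : K) : bipoly := (c%:P)%:P.
Definition mono (a b : nat) : bipoly := 'X^a * ('X^b)%:P.

(* Multiplication of k_{-1}[u,v] = k<u,v>/(vu+uv) in the basis u^a v^b:
   (u^a v^b)(u^c v^d) = (-1)^(b c) u^(a+c) v^(b+d). *)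
Definition skmul (p q : bipoly) : bipoly :=
  \sum_(a < size p) \sum_(b < size p`_a) \sum_(c < size q) \sum_(d < size q`_c)
     cst (p`_a`_b * q`_c`_d * (-1) ^+ (b * c)) * mono (a + c) (b + d).

Definition subst_with (mul : bipoly -> bipoly -> bipoly) (p x y : bipoly) : bipoly :=
  \sum_(i < size p) \sum_(j < size p`_i)
     mul (cst p`_i`_j) (mul (iter i (mul x) 1) (iter j (mul y) 1)).

Definition img_u (g : 'M[K]_2) : bipoly := cst (g 0 0) * U + cst (g 1 0) * V.
Definition img_v (g : 'M[K]_2) : bipoly := cst (g 0 1) * U + cst (g 1 1) * V.

Definition comm_act (g : 'M[K]_2) (p : bipoly) : bipoly :=
  subst_with *%R p (img_u g) (img_v g).
Definition skew_act (g : 'M[K]_2) (p : bipoly) : bipoly :=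
  subst_with skmul p (img_u g) (img_v g).

Definition mat2 (a b c d : K) : 'M[K]_2 :=
  \matrix_(i < 2, j < 2)
    if (i : nat) == 0%N then (if (j : nat) == 0%N then a else b)
    else (if (j : nat) == 0%N then c else d).

Inductive gen_grp (A B : 'M[K]_2) : 'M[K]_2 -> Prop :=
| gen_one : gen_grp A B 1%:M
| gen_A : gen_grp A B A
| gen_B : gen_grp A B B
| gen_mul x y : gen_grp A B x -> gen_grp A B y -> gen_grp A B (x *m y)
| gen_inv x : gen_grp A B x -> gen_grp A B (invmx x).

(* G_{n,k} for w a primitive (2nk)-th root of unity *)
Definition G_nk (n k : nat) (w : K) (g : 'M[K]_2) : Prop :=
  gen_grp (mat2 (w ^+ (2 * k)) 0 0 (w ^- (2 * k)))
          (mat2 0 (w ^+ n) (w ^+ n) 0) g.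

(* D_{m,q} for e a primitive (4q(m-q))-th root of unity *)
Definition D_mq (m q : nat) (e : K) (g : 'M[K]_2) : Prop :=
  gen_grp (mat2 (e ^+ (2 * (m - q))) 0 0 (e ^- (2 * (m - q))))
          (mat2 0 (e ^+ q) (e ^+ q) 0) g.

Definition skew_inv (G : 'M[K]_2 -> Prop) (p : bipoly) : Prop :=
  forall g, G g -> skew_act g p = p.
Definition comm_inv (G : 'M[K]_2 -> Prop) (p : bipoly) : Prop :=
  forall g, G g -> comm_act g p = p.

Definition skew_comm_alg_iso (A B : bipoly -> Prop) : Prop :=
  exists f : bipoly -> bipoly,
    [/\ forall p, A p -> B (f p),
        forall p q, A p -> A q -> f p = f q -> p = q,
        forall r, B r -> (exists2 p, A p & f p = r) &
       [/\ forall p q, A p -> A q -> f (p + q) = f p + f q,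
        forall p q, A p -> A q -> f (skmul p q) = f p * f q,
        f 1 = 1 &
        forall c p, A p -> f (cst c * p) = cst c * f p]].
End TwoVar.

Definition inS (x : nat * nat) : bool :=
  let: (n, k) := x in
  [&& 0 < k, coprime n k, 3 <= n, odd (n + k) & k %% 4 != 2]%N.

Definition inT (y : nat * nat) : bool :=
  let: (m, q) := y in [&& 1 < q, q < m & coprime m q]%N.

Definition theta (x : nat * nat) : nat * nat :=
  let: (n, k) := x in
  if odd n then (n + k %/ 2, n)%N else (n %/ 2 + k, n %/ 2)%N.

Definition theta_inv (y : nat * nat) : nat * nat :=
  let: (m, q) := y in
  if ~~ odd (m - q) then (q, 2 * (m - q))%N else (2 * q, m - q)%N.

From HB Require Import structures.
From mathcomp Require Import all_boot all_order all_algebra.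
From mathcomp Require Import zify ring.
Set Implicit Arguments. Unset Strict Implicit. Unset Printing Implicit Defensive.
Import GRing.Theory.
Local Open Scope ring_scope.

(* Both G_{n,k} and D_{m,q} are generated by a diagonal matrix diag(al, al^-1)
   and an antidiagonal matrix with equal entries be.  On a ring whose product
   of monomials is twisted by a sign s = +-1 (s = -1 for k_{-1}[u,v], s = 1
   for k[u,v]), such matrices act on coefficients by rescaling and
   transposition, so the invariants are the polynomials whose coefficients
   satisfy two explicit rules; in particular their support consists of
   "admissible" exponents (a, b) (Sections MonomialAction and Invariants).
   Choosing a square root j of -1, the rescaling p_ab |-> j^(a^2) j^b p_ab is
   then an algebra isomorphism from the skew invariants onto the commutative
   ones, provided the two groups have the same admissible exponents, those
   have equal parities, and the antidiagonal entries satisfy j be1 = be0 on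
   them (Section TwistIsomorphism).  For roots of unity these conditions are
   congruences on (a, b), which we check separately for n odd and n even. *)

Section Coefficients.
Variable K : fieldType.
Local Notation bp := (bipoly K).
Local Notation mono := (mono K).

Lemma coef_cst_mono (x : K) a b i j :
  (cst x * mono a b : bp)`_i`_j = if (i == a) && (j == b) then x else 0.
Proof.
rewrite /cst /mono mulrCA -polyCM coefXnM coefC.
case: ltnP => [lt|ge]; first by rewrite coef0 (ltn_eqF lt).
case: (eqVneq i a) => [->|ne] /=.
  by rewrite subnn coefCM coefXn; case: eqP; rewrite ?mulr1 ?mulr0.
by rewrite subn_eq0 leqNgt ltn_neqAle eq_sym ne ge coef0.
Qed.

Lemma coef_out (p : bp) a b :
  ~~ ((a < size p)%N && (b < size (p`_a)%R)%N) -> p`_a`_b = 0.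
Proof.
case/nandP; rewrite -leqNgt => H; last by rewrite nth_default.
by rewrite (nth_default 0 H) coef0.
Qed.

Lemma sum_ord_pick (T : zmodType) n a (G : nat -> T) :
  \sum_(i < n) (if a == (i : nat) then G i else 0) = if (a < n)%N then G a else 0.
Proof.
case: ltnP => [lt|ge].
  rewrite (bigD1 (Ordinal lt)) //= eqxx big1 ?addr0 // => i ne.
  by case: eqP => // E; case/eqP: ne; apply: val_inj.
by rewrite big1 // => i _; case: eqP => // E; move: (ltn_ord i); rewrite -E ltnNge ge.
Qed.

Lemma sum_support_pick (T : zmodType) (p : bp) a b (F : nat -> nat -> T) :
  (p`_a`_b = 0 -> F a b = 0) ->
  \sum_(i < size p) \sum_(j < size p`_i)
     (if (a == i) && (b == j) then F i j else 0) = F a b.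
Proof.
move=> Fout.
rewrite (eq_bigr (fun i : 'I_(size p) => if a == i
   then \sum_(j < size p`_i) (if b == j then F i j else 0) else 0)); last first.
  by move=> i _; case: (eqVneq a i) => _ /=; [apply: eq_bigr | rewrite big1].
rewrite (sum_ord_pick _ _
  (fun i => \sum_(j < size p`_i) (if b == j then F i j else 0))).
case: ltnP => Ha; last by rewrite Fout // coef_out // negb_and -leqNgt Ha.
rewrite (sum_ord_pick _ _ (F a)); case: ltnP => Hb //.
by rewrite Fout // coef_out // Ha /= -leqNgt.
Qed.

Lemma coef_bisum (p : bp) (F : nat -> nat -> K) a b :
  (p`_a`_b = 0 -> F a b = 0) ->
  (\sum_(i < size p) \sum_(j < size p`_i) cst (F i j) * mono i j)`_a`_b = F a b.
Proof.
move=> Fout; rewrite !coef_sum -[RHS](sum_support_pick Fout).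
apply: eq_bigr => i _; rewrite !coef_sum; apply: eq_bigr => j _.
exact: coef_cst_mono.
Qed.

Lemma coef_bisumT (p : bp) (F : nat -> nat -> K) a b :
  (p`_b`_a = 0 -> F b a = 0) ->
  (\sum_(i < size p) \sum_(j < size p`_i) cst (F i j) * mono j i)`_a`_b = F b a.
Proof.
move=> Fout; rewrite !coef_sum -[RHS](sum_support_pick Fout).
apply: eq_bigr => i _; rewrite !coef_sum; apply: eq_bigr => j _.
by rewrite coef_cst_mono andbC.
Qed.

Lemma sum_support_mono (T : zmodType) x a b (H : nat -> nat -> K -> T) :
  (forall i j, H i j 0 = 0) ->
  \sum_(i < size (cst x * mono a b)) \sum_(j < size (cst x * mono a b)`_i)
     H i j ((cst x * mono a b)`_i`_j) = H a b x.
Proof.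
move=> H0.
rewrite -[RHS](@sum_support_pick _ (cst x * mono a b) a b (fun i j => H i j x)).
  apply: eq_bigr => i _; apply: eq_bigr => j _; rewrite coef_cst_mono.
  by rewrite [a == i]eq_sym [b == j]eq_sym; case: ifP.
by rewrite coef_cst_mono !eqxx /= => ->.
Qed.

Lemma cst0 : cst 0 = 0 :> bp. Proof. by rewrite /cst !polyC0. Qed.
Lemma cstM x y : cst (x * y) = cst x * cst y :> bp. Proof. by rewrite /cst !polyCM. Qed.
Lemma mono00 : mono 0 0 = 1. Proof. by rewrite /mono !expr0 polyC1 mulr1. Qed.
Lemma one_cst_mono : 1 = cst 1 * mono 0 0 :> bp.
Proof. by rewrite mono00 mulr1 /cst !polyC1. Qed.
Lemma coef_cstM c (p : bp) a b : (cst c * p)`_a`_b = c * p`_a`_b.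
Proof. by rewrite /cst !coefCM. Qed.

(* A product on bipolynomials is s-twisted when it multiplies monomials by
   (u^a v^b)(u^c v^d) = s^(bc) u^(a+c) v^(b+d); s = 1 is k[u,v] and
   s = -1 is k_{-1}[u,v]. *)
Definition twisted (s : K) (mul : bp -> bp -> bp) : Prop :=
  forall x y a b c d, mul (cst x * mono a b) (cst y * mono c d) =
    cst (x * y * s ^+ (b * c)) * mono (a + c) (b + d).

Lemma skmul_twisted : twisted (-1) (@skmul K).
Proof.
move=> x y a b c d; rewrite /skmul; set Q := cst y * mono c d.
rewrite (@sum_support_mono _ _ _ _ (fun i j v =>
    \sum_(c0 < size Q) \sum_(d0 < size Q`_c0)
      cst (v * Q`_c0`_d0 * (-1) ^+ (j * c0)) * mono (i + c0) (j + d0))); last first.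
  by move=> i j; apply: big1 => c0 _; apply: big1 => d0 _; rewrite !mul0r.
rewrite (@sum_support_mono _ _ _ _
   (fun i j v => cst (x * v * (-1) ^+ (b * i)) * mono (a + i) (b + j))) //.
by move=> i j; rewrite mulr0 mul0r cst0 mul0r.
Qed.

Lemma mul_twisted : twisted 1 *%R.
Proof. by move=> x y a b c d; rewrite expr1n mulr1 cstM /mono !exprD polyCM; ring. Qed.

End Coefficients.

Section Matrices.
Variable K : fieldType.

Lemma mat2_mul (a b c d a' b' c' d' : K) :
  mat2 a b c d *m mat2 a' b' c' d' =
  mat2 (a * a' + b * c') (a * b' + b * d') (c * a' + d * c') (c * b' + d * d').
Proof.
apply/matrixP => i j; rewrite !mxE !big_ord_recr big_ord0 /= add0r !mxE /=.
by case: i => [[|[|i]] Hi]; case: j => [[|[|j]] Hj].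
Qed.

Lemma mat2_1 : 1%:M = mat2 1 0 0 1 :> 'M[K]_2.
Proof.
apply/matrixP => i j; rewrite !mxE.
by case: i => [[|[|i]] Hi]; case: j => [[|[|j]] Hj].
Qed.

Lemma invmx_eq n (A B : 'M[K]_n) : A *m B = 1%:M -> invmx A = B.
Proof.
move=> AB; have [uA _] := mulmx1_unit AB.
by rewrite -[invmx A]mulmx1 -AB mulmxA mulVmx // mul1mx.
Qed.

Lemma invmx_diag (a d : K) : a != 0 -> d != 0 ->
  invmx (mat2 a 0 0 d) = mat2 a^-1 0 0 d^-1.
Proof.
move=> an dn; apply: invmx_eq.
by rewrite mat2_mul !mul0r !mulr0 !addr0 !add0r !mulfV // mat2_1.
Qed.

Lemma invmx_anti (b c : K) : b != 0 -> c != 0 ->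
  invmx (mat2 0 b c 0) = mat2 0 c^-1 b^-1 0.
Proof.
move=> bn cn; apply: invmx_eq.
by rewrite mat2_mul !mul0r !mulr0 !addr0 !add0r !mulfV // mat2_1.
Qed.

Lemma img_diag (a d : K) :
  img_u (mat2 a 0 0 d) = cst a * mono K 1 0 /\
  img_v (mat2 a 0 0 d) = cst d * mono K 0 1.
Proof.
rewrite /img_u /img_v /U /V /mono !mxE /= !cst0 !mul0r addr0 add0r.
by rewrite !expr1 !expr0 polyC1 mulr1 mul1r.
Qed.

Lemma img_anti (b c : K) :
  img_u (mat2 0 b c 0) = cst c * mono K 0 1 /\
  img_v (mat2 0 b c 0) = cst b * mono K 1 0.
Proof.
rewrite /img_u /img_v /U /V /mono !mxE /= !cst0 !mul0r addr0 add0r.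
by rewrite !expr1 !expr0 polyC1 mulr1 mul1r.
Qed.

End Matrices.

Section MonomialAction.
Variable K : fieldType.
Local Notation bp := (bipoly K).
Local Notation mono := (mono K).
Variables (s : K) (mul : bp -> bp -> bp).
Hypothesis mul_tw : twisted s mul.

Definition act (g : 'M[K]_2) (p : bp) : bp := subst_with mul p (img_u g) (img_v g).

Lemma iter_mul_u x i : iter i (mul (cst x * mono 1 0)) 1 = cst (x ^+ i) * mono i 0.
Proof.
elim: i => [|i IH]; first by rewrite expr0 -one_cst_mono.
by rewrite iterS IH mul_tw mul0n expr0 mulr1 -exprS.
Qed.

Lemma iter_mul_v x i : iter i (mul (cst x * mono 0 1)) 1 = cst (x ^+ i) * mono 0 i.
Proof.
elim: i => [|i IH]; first by rewrite expr0 -one_cst_mono.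
by rewrite iterS IH mul_tw muln0 expr0 mulr1 -exprS.
Qed.

Lemma act_diag_coef a d p i j :
  (act (mat2 a 0 0 d) p)`_i`_j = p`_i`_j * (a ^+ i * d ^+ j).
Proof.
pose F i0 j0 := p`_i0`_j0 * (a ^+ i0 * d ^+ j0).
rewrite -[RHS](@coef_bisum _ p F); last by rewrite /F => ->; rewrite mul0r.
rewrite /act; have [-> ->] := img_diag a d; apply: (congr1 (fun q : bp => q`_i`_j)).
apply: eq_bigr => i0 _; apply: eq_bigr => j0 _.
rewrite iter_mul_u iter_mul_v mul_tw muln0 expr0 mulr1 addn0 add0n.
by rewrite -[cst _]mulr1 -mono00 mul_tw mul0n expr0 mulr1 !add0n.
Qed.

Lemma act_anti_coef b c p i j :
  (act (mat2 0 b c 0) p)`_i`_j = p`_j`_i * (c ^+ j * b ^+ i * s ^+ (j * i)).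
Proof.
pose F i0 j0 := p`_i0`_j0 * (c ^+ i0 * b ^+ j0 * s ^+ (i0 * j0)).
rewrite -[RHS](@coef_bisumT _ p F); last by rewrite /F => ->; rewrite mul0r.
rewrite /act; have [-> ->] := img_anti b c; apply: (congr1 (fun q : bp => q`_i`_j)).
apply: eq_bigr => i0 _; apply: eq_bigr => j0 _.
rewrite iter_mul_u iter_mul_v mul_tw.
by rewrite -[cst _]mulr1 -mono00 mul_tw mul0n expr0 mulr1 !add0n addn0.
Qed.

End MonomialAction.

Section Invariants.
Variable K : fieldType.
Local Notation bp := (bipoly K).
Variables (s : K) (mul : bp -> bp -> bp).
Hypothesis mul_tw : twisted s mul.
Hypothesis s_sq : s * s = 1.
Variables al be : K.
Hypotheses (al_neq0 : al != 0) (be_neq0 : be != 0).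

Definition coef_inv (p : bp) : Prop :=
  (forall a b, p`_a`_b * (al ^+ a * al^-1 ^+ b) = p`_a`_b) /\
  (forall a b, p`_b`_a * (be ^+ b * be ^+ a * s ^+ (b * a)) = p`_a`_b).

(* Exponents (i, j) on which both generators act by a sign-free scalar. *)
Definition admissible (i j : nat) : Prop :=
  al ^+ i * al^-1 ^+ j = 1 /\ (be ^+ i * be ^+ j) ^+ 2 = 1.

Lemma admissible_sym i j : admissible i j -> admissible j i.
Proof.
case; rewrite !exprVn => Hal Hbe; split; last by rewrite mulrC.
have Hj : al ^+ j != 0 by rewrite expf_neq0.
have E : al ^+ i = al ^+ j by rewrite -[al ^+ i](mulfVK Hj) Hal mul1r.
by rewrite exprVn E mulfV.
Qed.

Lemma coef_inv_admissible p i j : coef_inv p -> p`_i`_j != 0 -> admissible i j.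
Proof.
case=> Hd Ha nz; split; first by apply: (mulfI nz); rewrite mulr1 Hd.
have nzT : p`_j`_i != 0 by apply: contraNneq nz => Z; rewrite -(Ha i j) Z mul0r.
have E := Ha j i; rewrite -(Ha i j) -mulrA in E.
have {E} := mulfI nzT (etrans E (esym (mulr1 _))).
rewrite (mulnC j i) [be ^+ j * _]mulrC; set X := be ^+ i * be ^+ j.
have SS : s ^+ (i * j) * s ^+ (i * j) = 1 by rewrite -exprMn s_sq expr1n.
by rewrite mulrACA SS mulr1 -expr2.
Qed.

(* Monomial matrices whose action fixes every admissible monomial; the group
   generated by the two generators consists of such matrices. *)
Definition stabilizing (g : 'M[K]_2) : Prop :=
  (exists a d, [/\ g = mat2 a 0 0 d, a != 0, d != 0 &
      forall i j, admissible i j -> a ^+ i * d ^+ j = 1]) \/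
  (exists b c, [/\ g = mat2 0 b c 0, b != 0, c != 0 &
      forall i j, admissible i j -> c ^+ i * b ^+ j = be ^+ i * be ^+ j]).

Lemma stabilizing_mul g h : stabilizing g -> stabilizing h -> stabilizing (g *m h).
Proof.
move=> [[a [d [-> an dn Ha]]]|[b [c [-> bn cn Hb]]]]
       [[a' [d' [-> an' dn' Ha']]]|[b' [c' [-> bn' cn' Hb']]]];
  rewrite mat2_mul !mul0r !mulr0 ?add0r ?addr0.
- left; exists (a * a'), (d * d'); split; rewrite ?mulf_neq0 // => i j v.
  by rewrite !exprMn mulrACA Ha // Ha' // mulr1.
- right; exists (a * b'), (d * c'); split; rewrite ?mulf_neq0 // => i j v.
  rewrite !exprMn mulrACA [d ^+ i * _]mulrC Ha ?mul1r ?Hb' //.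
  exact: admissible_sym.
- right; exists (b * d'), (c * a'); split; rewrite ?mulf_neq0 // => i j v.
  by rewrite !exprMn mulrACA Ha' ?mulr1 ?Hb.
- left; exists (b * c'), (c * b'); split; rewrite ?mulf_neq0 // => i j v.
  rewrite !exprMn mulrACA Hb' // [b ^+ i * _]mulrC Hb; last exact: admissible_sym.
  by case: v => _; rewrite expr2 [be ^+ j * _]mulrC.
Qed.

Lemma stabilizing_inv g : stabilizing g -> stabilizing (invmx g).
Proof.
move=> [[a [d [-> an dn Ha]]]|[b [c [-> bn cn Hb]]]].
  left; exists a^-1, d^-1; rewrite invmx_diag // !invr_neq0 //.
  by split=> // i j v; rewrite !exprVn -invfM Ha // invr1.
right; exists c^-1, b^-1; rewrite invmx_anti // !invr_neq0 //.
split=> // i j v; rewrite !exprVn -invfM [b ^+ i * _]mulrC Hb;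
  last exact: admissible_sym.
case: v => _; rewrite [be ^+ j * _]mulrC; set X := be ^+ i * be ^+ j => X2.
have Xn : X != 0 by apply: contra_eq_neq X2 => ->; rewrite expr2 mul0r eq_sym oner_neq0.
by apply: (mulfI Xn); rewrite mulfV // -expr2 X2.
Qed.

Lemma gen_stabilizing g :
  gen_grp (mat2 al 0 0 al^-1) (mat2 0 be be 0) g -> stabilizing g.
Proof.
elim=> {g} [||| g h _ Hg _ Hh | g _ Hg].
- left; exists 1, 1; rewrite mat2_1 oner_neq0; split=> // i j _.
  by rewrite !expr1n mulr1.
- by left; exists al, al^-1; rewrite invr_neq0 //; split=> // i j [].
- by right; exists be, be.
- exact: stabilizing_mul.
- exact: stabilizing_inv.
Qed.

Lemma stabilizing_act g p : stabilizing g -> coef_inv p -> act mul g p = p.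
Proof.
move=> [[a [d [-> an dn Ha]]]|[b [c [-> bn cn Hb]]]] Cp;
  apply/polyP => i; apply/polyP => j.
  rewrite (act_diag_coef mul_tw).
  have [->|nz] := eqVneq p`_i`_j 0; first by rewrite mul0r.
  by rewrite Ha ?mulr1 //; exact: coef_inv_admissible nz.
rewrite (act_anti_coef mul_tw); have [Z|nz] := eqVneq p`_j`_i 0.
  by rewrite Z mul0r -(proj2 Cp i j) Z mul0r.
by rewrite Hb; [apply: (proj2 Cp) | exact: coef_inv_admissible nz].
Qed.

Lemma invariant_iff p :
  (forall g, gen_grp (mat2 al 0 0 al^-1) (mat2 0 be be 0) g -> act mul g p = p)
  <-> coef_inv p.
Proof.
split=> [H|Cp g /gen_stabilizing Sg]; last exact: stabilizing_act.
by split=> a b; [rewrite -(act_diag_coef mul_tw) | rewrite -(act_anti_coef mul_tw)];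
  rewrite H //; constructor.
Qed.

End Invariants.

Section Rescale.
Variable K : fieldType.
Local Notation bp := (bipoly K).

Definition rescale (F : nat -> nat -> K) (p : bp) : bp :=
  \sum_(i < size p) \sum_(j < size p`_i) cst (F i j * p`_i`_j) * mono K i j.

Lemma rescale_coef F p a b : (rescale F p)`_a`_b = F a b * p`_a`_b.
Proof.
by rewrite (@coef_bisum _ p (fun i j => F i j * p`_i`_j)) // => ->; rewrite mulr0.
Qed.

Lemma rescale_sum F (I : Type) (r : seq I) (P : I -> bp) :
  rescale F (\sum_(i <- r) P i) = \sum_(i <- r) rescale F (P i).
Proof.
apply/polyP => a; apply/polyP => b; rewrite rescale_coef !coef_sum mulr_sumr.
by apply: eq_bigr => i _; rewrite rescale_coef.
Qed.

Lemma rescale_cst_mono F x a b :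
  rescale F (cst x * mono K a b) = cst (F a b * x) * mono K a b.
Proof.
apply/polyP => i; apply/polyP => j; rewrite rescale_coef !coef_cst_mono.
by case: (eqVneq i a) => [->|]; case: (eqVneq j b) => [->|] //=; rewrite mulr0.
Qed.

End Rescale.

(* Scalar identities for the twisting coefficients j^(a^2) j^b, where j is a
   square root of -1: they turn the sign (-1)^(bc) of the skew product into
   a coboundary as long as exponents have matching parities. *)
Section TwistCoefficients.
Variable K : fieldType.
Variable j : K.
Hypothesis j_sq : j ^+ 2 = -1.

Definition twist_coef (a b : nat) : K := j ^+ (a * a) * j ^+ b.

Lemma j_neq0 : j != 0.
Proof.
by apply: contra_eq_neq j_sq => ->; rewrite expr2 mul0r eq_sym oppr_eq0 oner_eq0.
Qed.

Lemma twist_coef_neq0 a b : twist_coef a b != 0.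
Proof. by rewrite mulf_neq0 // expf_neq0 // j_neq0. Qed.

Lemma j_exp2 n : j ^+ (2 * n) = (-1) ^+ n.
Proof. by rewrite exprM j_sq. Qed.

Lemma sqr_mod4 a : (a * a = odd a %[mod 4])%N.
Proof.
rewrite -{1 2}(odd_double_half a); set r := odd a; set h := a./2.
have -> : ((r + h.*2) * (r + h.*2) = (h * r + h * h) * 4 + r * r)%N.
  by rewrite -!muln2; lia.
by rewrite modnMDl; case: r.
Qed.

(* j^(a^2) only depends on the parity of a, since j^4 = 1. *)
Lemma j_exp_sqr a b : odd a = odd b -> j ^+ (a * a) = j ^+ (b * b).
Proof.
have j4 : j ^+ 4 = 1 by rewrite (j_exp2 2) sqrrN expr1n.
by move=> E; rewrite -(expr_mod _ j4) -[in RHS](expr_mod _ j4) !sqr_mod4 E.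
Qed.

Lemma sign_parity a b c : odd a = odd b -> (-1) ^+ (a * c) = (-1) ^+ (b * c) :> K.
Proof. by move=> E; rewrite -signr_odd -[in RHS]signr_odd !oddM E. Qed.

(* twist_coef intertwines the skew and the commutative products. *)
Lemma twist_coefD a b c d : odd a = odd b ->
  twist_coef (a + c) (b + d) = twist_coef a b * twist_coef c d * (-1) ^+ (b * c).
Proof.
move=> Eab; rewrite /twist_coef -(sign_parity c Eab) -j_exp2.
have -> : ((a + c) * (a + c) = a * a + c * c + 2 * (a * c))%N by lia.
by rewrite !exprD; ring.
Qed.

(* twist_coef intertwines transposition in the two rings, up to the
   factor j^(a+b) relating the antidiagonal entries. *)
Lemma twist_coefT a b : odd a = odd b ->
  twist_coef b a = twist_coef a b * j ^+ (a + b) * (-1) ^+ (b * a).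
Proof.
move=> Eab; rewrite /twist_coef (j_exp_sqr Eab) exprD.
have -> : (-1) ^+ (b * a) = (-1) ^+ b :> K.
  by rewrite -signr_odd oddM Eab andbb signr_odd.
have Jb : j ^+ b * j ^+ b = (-1) ^+ b by rewrite -exprD addnn -mul2n j_exp2.
have B4 : j ^+ b * j ^+ b * (j ^+ b * j ^+ b) = 1.
  by rewrite Jb -exprD addnn -mul2n exprM sqrrN !expr1n.
by rewrite -Jb -[LHS]mulr1 -B4; ring.
Qed.

End TwistCoefficients.

Section TwistIsomorphism.
Variable K : fieldType.
Local Notation bp := (bipoly K).
Variable j : K.
Hypothesis j_sq : j ^+ 2 = -1.
Variables al0 be0 al1 be1 : K.
Hypotheses (al0_neq0 : al0 != 0) (al1_neq0 : al1 != 0).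
Hypothesis adm_equiv : forall a b, admissible al0 be0 a b <-> admissible al1 be1 a b.
Hypothesis adm_parity : forall a b, admissible al0 be0 a b -> odd a = odd b.
Hypothesis adm_scale :
  forall a b, admissible al0 be0 a b -> (j * be1) ^+ (a + b) = be0 ^+ (a + b).

Local Notation tc := (twist_coef j).
Local Notation skew_cond := (coef_inv (-1) al0 be0).
Local Notation comm_cond := (coef_inv 1 al1 be1).

Lemma sign_sq : (-1) * (-1) = 1 :> K. Proof. by rewrite mulrNN mulr1. Qed.

Lemma twist_transposed a b : admissible al0 be0 a b ->
  tc b a * (be1 ^+ b * be1 ^+ a) = tc a b * (be0 ^+ b * be0 ^+ a * (-1) ^+ (b * a)).
Proof.
move=> adm; rewrite (twist_coefT j_sq (adm_parity adm)) -!exprD [(b + a)%N]addnC.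
by rewrite -(adm_scale adm) exprMn; ring.
Qed.

Lemma twist_coef_inv p : skew_cond p -> comm_cond (rescale tc p).
Proof.
move=> Cp; split=> a b; rewrite !rescale_coef.
  have [->|nz] := eqVneq p`_a`_b 0; first by rewrite !(mulr0, mul0r).
  have [-> _] := (adm_equiv a b).1 (coef_inv_admissible sign_sq Cp nz).
  by rewrite mulr1.
rewrite -(proj2 Cp a b) expr1n mulr1.
have [->|nz] := eqVneq p`_b`_a 0; first by rewrite !(mulr0, mul0r).
have adm := admissible_sym al0_neq0 (coef_inv_admissible sign_sq Cp nz).
by rewrite mulrAC (twist_transposed adm); ring.
Qed.

Lemma untwist_coef_inv r :
  comm_cond r -> skew_cond (rescale (fun a b => (tc a b)^-1) r).
Proof.
move=> Cr; split=> a b; rewrite !rescale_coef.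
  have [->|nz] := eqVneq r`_a`_b 0; first by rewrite !(mulr0, mul0r).
  have [-> _] := (adm_equiv a b).2 (coef_inv_admissible (mulr1 1) Cr nz).
  by rewrite mulr1.
rewrite -(proj2 Cr a b) expr1n mulr1.
have [->|nz] := eqVneq r`_b`_a 0; first by rewrite !(mulr0, mul0r).
have adm := (adm_equiv b a).2 (coef_inv_admissible (mulr1 1) Cr nz).
have := twist_transposed (admissible_sym al0_neq0 adm).
move: (twist_coef_neq0 j_sq a b) (twist_coef_neq0 j_sq b a).
move: (tc a b) (tc b a) => x y xn yn E.
by apply: (mulfI xn); rewrite mulVKf // [LHS]mulrCA -E -mulrA mulrCA mulKf.
Qed.

Lemma twist_skmul p q : skew_cond p -> skew_cond q ->
  rescale tc (skmul p q) = rescale tc p * rescale tc q.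
Proof.
move=> Cp Cq; rewrite /skmul rescale_sum {2 3}/rescale mulr_suml.
apply: eq_bigr => a _; rewrite rescale_sum mulr_suml; apply: eq_bigr => b _.
rewrite rescale_sum mulr_sumr; apply: eq_bigr => c _.
rewrite rescale_sum mulr_sumr; apply: eq_bigr => d _.
rewrite rescale_cst_mono mul_twisted expr1n mulr1; congr (cst _ * _).
have [->|nzp] := eqVneq p`_a`_b 0; first by rewrite !(mulr0, mul0r).
have Eab := adm_parity (coef_inv_admissible sign_sq Cp nzp).
rewrite (twist_coefD j_sq _ _ Eab).
have SS : (-1) ^+ (b * c) * (-1) ^+ (b * c) = 1 :> K.
  by rewrite -exprD addnn -mul2n exprM sqrrN !expr1n.
move: SS; set S := (-1) ^+ (b * c) => SS.
by rewrite -[RHS]mulr1 -SS; ring.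
Qed.

Theorem twist_iso : skew_comm_alg_iso skew_cond comm_cond.
Proof.
exists (rescale tc); split.
- exact: twist_coef_inv.
- move=> p q _ _ E; apply/polyP => a; apply/polyP => b.
  by apply: (mulfI (twist_coef_neq0 j_sq a b)); rewrite -!rescale_coef E.
- move=> r Cr; exists (rescale (fun a b => (tc a b)^-1) r).
    exact: untwist_coef_inv.
  apply/polyP => a; apply/polyP => b.
  by rewrite !rescale_coef mulVKf // twist_coef_neq0.
split.
- move=> p q _ _; apply/polyP => a; apply/polyP => b.
  by rewrite !(rescale_coef, coefD) mulrDr.
- exact: twist_skmul.
- apply/polyP => a; apply/polyP => b.
  rewrite one_cst_mono rescale_cst_mono !coef_cst_mono.
  by case: ifP; rewrite // /twist_coef mul0n !expr0 !mulr1.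
- move=> c p _; apply/polyP => a; apply/polyP => b.
  by rewrite !(rescale_coef, coef_cstM) mulrCA.
Qed.

End TwistIsomorphism.

Section RootsOfUnity.
Variable K : fieldType.

Lemma prim_root_neq0 N (z : K) : N.-primitive_root z -> z != 0.
Proof.
move=> Hz; apply: contra_eq_neq (prim_expr_order Hz) => ->.
by case: N Hz => [/prim_order_gt0 //|N _]; rewrite expr0n eq_sym oner_neq0.
Qed.

Lemma prim_root_half M (z : K) : (2 * M)%N.-primitive_root z -> z ^+ M = -1.
Proof.
move=> Hz; have M0 : (0 < M)%N by move: (prim_order_gt0 Hz); rewrite muln_gt0.
have := sqrf_eq1 (z ^+ M).
rewrite -exprM mulnC prim_expr_order // eqxx => /esym /orP [] /eqP // E.
have := prim_order_dvd Hz M; rewrite E eqxx => /(dvdn_leq M0); lia.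
Qed.

Lemma admissible_prim D E F (z : K) a b :
  (D * E)%N.-primitive_root z ->
  admissible (z ^+ D) (z ^+ F) a b <->
  [&& a == b %[mod E] & D * E %| F * (a + b) * 2]%N.
Proof.
move=> Hz; have := prim_order_gt0 Hz; rewrite muln_gt0 => /andP [_ E0].
have zD : E.-primitive_root (z ^+ D).
  by have := dvdn_prim_root Hz (dvdn_mull D (dvdnn E)); rewrite mulnK.
have xb : z ^+ (D * b) != 0 by rewrite !expf_neq0 // (prim_root_neq0 Hz).
rewrite /admissible -(eq_prim_root_expr zD) (prim_order_dvd Hz) exprVn.
rewrite -!exprM -exprD -exprM -mulnDr; split.
  by case=> H /eqP ->; rewrite andbT; apply/eqP; rewrite -[LHS](mulfVK xb) H mul1r.
by case/andP => /eqP -> /eqP ->; rewrite mulfV.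
Qed.

End RootsOfUnity.

Lemma twist_iso_roots (K : fieldType) (j w e : K) (n k q r : nat) :
  j ^+ 2 = -1 -> (2 * n * k)%N.-primitive_root w -> (4 * q * r)%N.-primitive_root e ->
  (forall a b, [&& a == b %[mod n] & k %| a + b]%N =
               [&& a == b %[mod 2 * q] & 2 * r %| a + b]%N) ->
  (forall a b, a == b %[mod n] -> k %| a + b -> odd a = odd b)%N ->
  (forall a b, (a == b %[mod n])%N -> (k %| a + b)%N ->
               (j * e ^+ q) ^+ (a + b) = (w ^+ n) ^+ (a + b)) ->
  skew_comm_alg_iso (coef_inv (-1) (w ^+ (2 * k)) (w ^+ n))
                    (coef_inv 1 (e ^+ (2 * r)) (e ^+ q)).
Proof.
move=> j_sq Hw He cong_equiv cong_parity cong_scale.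
have := prim_order_gt0 Hw; rewrite !muln_gt0 => /andP [/andP [_ n0] k0].
have := prim_order_gt0 He; rewrite !muln_gt0 => /andP [/andP [_ q0] r0].
have adm_w a b : admissible (w ^+ (2 * k)) (w ^+ n) a b <->
                 [&& a == b %[mod n] & k %| a + b]%N.
  have Hw' : (2 * k * n)%N.-primitive_root w by rewrite mulnAC.
  rewrite (admissible_prim _ _ _ Hw').
  have -> : (2 * k * n = 2 * n * k)%N by rewrite mulnAC.
  have -> : (n * (a + b) * 2 = 2 * n * (a + b))%N by rewrite mulnC mulnA.
  by rewrite dvdn_pmul2l // muln_gt0 n0.
have adm_e a b : admissible (e ^+ (2 * r)) (e ^+ q) a b <->
                 [&& a == b %[mod 2 * q] & 2 * r %| a + b]%N.
  have He' : (2 * r * (2 * q))%N.-primitive_root e.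
    by rewrite (_ : 2 * r * (2 * q) = 4 * q * r)%N //; nia.
  rewrite (admissible_prim _ _ _ He').
  have -> : (q * (a + b) * 2 = 2 * q * (a + b))%N by rewrite mulnC mulnA.
  by rewrite [(2 * r * _)%N]mulnC dvdn_pmul2l // muln_gt0 q0.
apply: (twist_iso j_sq) => [|a b|a b|a b];
  rewrite ?expf_neq0 ?(prim_root_neq0 Hw) ?(prim_root_neq0 He) //.
- by rewrite adm_w adm_e cong_equiv.
- by case/adm_w/andP; apply: cong_parity.
- by case/adm_w/andP => Hab Hk; rewrite cong_scale.
Qed.

(* Case n odd: theta(n, 2r) = (n + r, n), with r even. *)
Lemma iso_odd_case (K : fieldType) (j w e : K) (n r : nat) :
  j ^+ 2 = -1 -> odd n -> ~~ odd r ->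
  (2 * n * (2 * r))%N.-primitive_root w -> (4 * n * r)%N.-primitive_root e ->
  skew_comm_alg_iso (coef_inv (-1) (w ^+ (2 * (2 * r))) (w ^+ n))
                    (coef_inv 1 (e ^+ (2 * r)) (e ^+ n)).
Proof.
move=> j_sq On Er Hw He.
have even_sum a b : (2 * r %| a + b)%N -> odd a = odd b.
  move=> /(dvdn_trans (dvdn_mulr r (dvdnn 2))); rewrite dvdn2 oddD.
  by case: (odd a); case: (odd b).
apply: (twist_iso_roots j_sq Hw He) => [||a b _ /dvdnP [t ->]].
- move=> a b; have [/even_sum Eab|] := boolP (2 * r %| a + b)%N;
    rewrite ?andbF ?andbT //.
  by rewrite [(2 * n)%N]mulnC chinese_remainder ?coprimen2 // !modn2 Eab eqxx andbT.
- by move=> a b _; apply: even_sum.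
have Ej : (j * e ^+ n) ^+ (2 * r) = -1.
  rewrite exprMn exprM j_sq -signr_odd (negbTE Er) -exprM -mulnCA mul1r.
  by apply: prim_root_half; rewrite !mulnA.
have Ew : (w ^+ n) ^+ (2 * r) = -1.
  by rewrite -exprM; apply: prim_root_half; rewrite mulnA.
by rewrite mulnC exprM Ej [in RHS]exprM Ew.
Qed.

(* Case n = 2q even: theta(2q, k) = (q + k, q), with k odd. *)
Lemma iso_even_case (K : fieldType) (j w e : K) (q k : nat) :
  j ^+ 2 = -1 -> odd k ->
  (2 * (2 * q) * k)%N.-primitive_root w -> (4 * q * k)%N.-primitive_root e ->
  skew_comm_alg_iso (coef_inv (-1) (w ^+ (2 * k)) (w ^+ (2 * q)))
                    (coef_inv 1 (e ^+ (2 * k)) (e ^+ q)).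
Proof.
move=> j_sq Ok Hw He.
have cong_parity a b : (a == b %[mod 2 * q])%N -> odd a = odd b.
  move=> /eqP Hab; have : (a %% 2 = b %% 2)%N.
    by rewrite -(modn_dvdm a (dvdn_mulr q (dvdnn 2))) Hab modn_dvdm // dvdn_mulr.
  by rewrite !modn2; case: (odd a); case: (odd b).
have double_div a b : (a == b %[mod 2 * q])%N -> (k %| a + b)%N -> (2 * k %| a + b)%N.
  move=> /cong_parity Eab Hk; rewrite Gauss_dvd ?coprime2n ?Ok // Hk andbT dvdn2 oddD.
  by rewrite Eab addbb.
apply: (twist_iso_roots j_sq Hw He) => [||a b Hab Hk].
- move=> a b; have [Hab|] := boolP (a == b %[mod 2 * q])%N; rewrite //=.
  by apply/idP/idP => [/(double_div _ _ Hab) | /(dvdn_trans (dvdn_mull 2 (dvdnn k)))].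
- by move=> a b /cong_parity.
have /dvdnP [t ->] := double_div a b Hab Hk.
have Ee : e ^+ (2 * q * k) = -1.
  by apply: prim_root_half; rewrite !mulnA.
have Ej : (j * e ^+ q) ^+ (2 * k) = 1.
  rewrite exprMn exprM j_sq -signr_odd Ok -exprM mulnCA mulnA Ee.
  by rewrite expr1 mulrNN mulr1.
have Ew : (w ^+ (2 * q)) ^+ (2 * k) = 1.
  by rewrite -exprM (_ : 2 * q * (2 * k) = 2 * (2 * q) * k)%N ?prim_expr_order //; nia.
by rewrite mulnC exprM Ej [in RHS]exprM Ew.
Qed.

Lemma iso_theta (K : fieldType) (j w e : K) (n k : nat) :
  j ^+ 2 = -1 -> inS (n, k) -> (2 * n * k)%N.-primitive_root w ->
  (4 * (theta (n, k)).2 * ((theta (n, k)).1 - (theta (n, k)).2))%N.-primitive_root e ->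
  skew_comm_alg_iso (coef_inv (-1) (w ^+ (2 * k)) (w ^+ n))
    (coef_inv 1 (e ^+ (2 * ((theta (n, k)).1 - (theta (n, k)).2)))
                (e ^+ (theta (n, k)).2)).
Proof.
move=> j_sq /and5P [_ _ _ Onk k4]; rewrite /theta; case: ifP => On /=.
  have /dvdnP [r Ek] : (2 %| k)%N by move: Onk; rewrite oddD On dvdn2; case: (odd k).
  rewrite Ek mulnK // addKn [(r * 2)%N]mulnC => Hw He.
  by apply: (iso_odd_case j_sq) => //; move: k4; rewrite Ek; lia.
have /dvdnP [q En] : (2 %| n)%N by rewrite dvdn2 On.
rewrite En mulnK // addKn [(q * 2)%N]mulnC => Hw He.
apply: (iso_even_case j_sq) => //.
by move: Onk; rewrite En oddD oddM andbF.
Qed.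

Lemma iso_transfer (K : fieldType) (A A' B B' : bipoly K -> Prop) :
  (forall p, A p <-> A' p) -> (forall p, B p <-> B' p) ->
  skew_comm_alg_iso A B -> skew_comm_alg_iso A' B'.
Proof.
move=> HA HB [f [AB inj surj [fD fM f1 fZ]]]; exists f; split.
- by move=> p /HA /AB /HB.
- by move=> p q /HA Ap /HA Aq; apply: inj.
- by move=> r /HB /surj [p /HA Ap fp]; exists p.
split=> [p q /HA Ap /HA Aq | p q /HA Ap /HA Aq | | c p /HA Ap].
- exact: fD.
- exact: fM.
- exact: f1.
- exact: fZ.
Qed.

Lemma sqrt_minus1 (K : closedFieldType) : exists j : K, j ^+ 2 = -1.
Proof.
have [x Hx] := @solve_monicpoly K 2 (fun i => if i == 0%N then -1 else 0) isT.
exists x; rewrite Hx big_ord_recr big_ord_recr big_ord0 /=.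
by rewrite add0r expr0 mulr1 mul0r addr0.
Qed.

Lemma coprime_subn m q : (q <= m)%N -> coprime q (m - q) = coprime m q.
Proof. by move=> H; rewrite /coprime -gcdnDl subnKC // gcdnC. Qed.

Lemma coprime_addn a b : coprime (a + b) a = coprime a b.
Proof. by rewrite coprime_sym /coprime gcdnDl. Qed.

(* For (m, q) in T with m - q even, q is odd (else 2 divides gcd(m, q)). *)
Lemma inT_odd m q : (q < m)%N -> coprime m q -> ~~ odd (m - q) -> odd q.
Proof.
move=> qm cop Ed; apply: contraLR cop => Eq; apply/negP => /eqP g1.
have : (2 %| gcdn m q)%N.
  rewrite dvdn_gcd !dvdn2 Eq andbT.
  by move: Ed; rewrite oddB ?(ltnW qm) // (negbTE Eq) addbF.
by rewrite g1.
Qed.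

Lemma theta_inT x : inS x -> inT (theta x).
Proof.
case: x => n k /and5P [k0 cop n3 Onk k4]; rewrite /theta.
case On: (odd n) => /=.
- have /dvdnP [r Ek] : (2 %| k)%N by move: Onk; rewrite oddD On dvdn2; case: (odd k).
  rewrite Ek mulnK // coprime_addn; apply/and3P; split; try lia.
  by move: cop; rewrite Ek coprimeMr => /andP [].
- have /dvdnP [q En] : (2 %| n)%N by rewrite dvdn2 On.
  rewrite En mulnK // coprime_addn; apply/and3P; split; try lia.
  by move: cop; rewrite En coprimeMl => /andP [].
Qed.

Lemma theta_invK x : inS x -> theta_inv (theta x) = x.
Proof.
case: x => n k /and5P [_ _ _ Onk k4]; rewrite /theta /theta_inv.
case On: (odd n) => /=.
- have /dvdnP [r Ek] : (2 %| k)%N by move: Onk; rewrite oddD On dvdn2; case: (odd k).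
  rewrite Ek mulnK // addKn (_ : odd r = false) 1?mulnC //.
  by apply/negbTE; move: k4; rewrite Ek; lia.
- have Ok : odd k by move: Onk; rewrite oddD On.
  by rewrite addKn Ok /= mulnC divnK // dvdn2 On.
Qed.

Lemma theta_inv_inS y : inT y -> inS (theta_inv y).
Proof.
case: y => m q /and3P [q1 qm cop]; rewrite /theta_inv.
have cop' : coprime q (m - q) by rewrite coprime_subn ?(ltnW qm).
case Ed: (odd (m - q)) => /=; apply/and5P; split; try lia.
- by rewrite coprimeMl coprime2n Ed.
- by rewrite coprimeMr cop' andbT coprime_sym coprime2n (inT_odd qm cop (negbT Ed)).
- by move: (inT_odd qm cop (negbT Ed)); lia.
- by move: (inT_odd qm cop (negbT Ed)); lia.
Qed.

Lemma thetaK y : inT y -> theta (theta_inv y) = y.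
Proof.
case: y => m q /and3P [q1 qm cop]; rewrite /theta /theta_inv.
case Ed: (odd (m - q)) => /=; first by rewrite oddM /= !mulKn // subnKC // ltnW.
by rewrite (inT_odd qm cop (negbT Ed)) /= mulKn // subnKC // ltnW.
Qed.

Theorem mainTheorem17 :
  [/\ forall x, inS x -> inT (theta x),
      forall x, inS x -> theta_inv (theta x) = x,
      forall y, inT y -> inS (theta_inv y),
      forall y, inT y -> theta (theta_inv y) = y &
      forall (K : closedFieldType), [pchar K] =i pred0 ->
      forall (n k : nat) (w e : K), inS (n, k) ->
        (2 * n * k)%N.-primitive_root w ->
        (4 * (theta (n, k)).2 * ((theta (n, k)).1 - (theta (n, k)).2))%N.-primitive_root e ->
        skew_comm_alg_iso (skew_inv (G_nk n k w))
                          (comm_inv (D_mq (theta (n, k)).1 (theta (n, k)).2 e))].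
Proof.
split; [exact: theta_inT | exact: theta_invK | exact: theta_inv_inS | exact: thetaK |].
move=> K _ n k w e HS Hw He; have [j j_sq] := sqrt_minus1 K.
have w_neq0 := prim_root_neq0 Hw; have e_neq0 := prim_root_neq0 He.
apply: (iso_transfer _ _ (iso_theta j_sq HS Hw He)) => p; apply: iff_sym.
- exact: (invariant_iff (@skmul_twisted K) (sign_sq K)
           (expf_neq0 _ w_neq0) (expf_neq0 _ w_neq0)).
- exact: (invariant_iff (@mul_twisted K) (mulr1 1)
           (expf_neq0 _ e_neq0) (expf_neq0 _ e_neq0)).
Qed.
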